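(* Let $k,\ell,n$ be positive integers with $k+\ell=n$ and let $M,B,N>0$. Let $A$ be the symmetric $n\times n$ matrix whose first $k$ rows all equal $(M,\dots,M,B,\dots,B)$ ($k$ entries $M$ followed by $\ell$ entries $B$) and whose last $\ell$ rows all equal $(B,\dots,B,N,\dots,N)$ ($k$ entries $B$ followed by $\ell$ entries $N$). Put $t=MN/B^2$. Then the Sinkhorn limit $S(A)$ is the block matrix whose entries in the upper-left $k\times k$ block all equal $a$, whose entries in the two off-diagonal blocks ($k\times\ell$ and $\ell\times k$) all equal $b$, and whose entries in the lower-right $\ell\times\ell$ block all equal $c$, where: if $t=1$, then $a=b=c=1/n$; and if $t\neq 1$, then \[ a=\frac1k+\frac{n-\sqrt{4k\ell t+(k-\ell)^2}}{2k^2(t-1)},\qquad b=\frac{1-ka}{\ell},\qquad c=\frac{1-kb}{\ell}=\frac{\ell-k+k^2a}{\ell^2}. \] In particular $S(A)$ depends only on the ratio $MN/B^2$.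
   Context: A matrix is doubly stochastic if it is nonnegative with all row and column sums equal to $1$. For a positive $n\times n$ matrix $A$ there exist positive diagonal matrices $X,Y$ with $XAY$ doubly stochastic, and this matrix $XAY$ is unique; it is called the Sinkhorn limit $S(A)$. For symmetric positive $A$ one may take $Y=X$. *)

From HB Require Import structures.
From mathcomp Require Import all_boot all_order all_algebra.
Set Implicit Arguments. Unset Strict Implicit. Unset Printing Implicit Defensive.
Import Order.TTheory GRing.Theory Num.Theory.
Local Open Scope ring_scope.

Definition doubly_stochastic (R : numDomainType) (n : nat) (S : 'M[R]_n) : Prop :=
  (forall i j, 0 <= S i j) /\
  (forall i, \sum_(j < n) S i j = 1) /\
  (forall j, \sum_(i < n) S i j = 1).

Definition sinkhorn_limit (R : numDomainType) (n : nat) (A S : 'M[R]_n) : Prop :=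
  doubly_stochastic S /\
  exists (x y : 'rV[R]_n),
    (forall i, 0 < x 0 i) /\ (forall i, 0 < y 0 i) /\
    S = diag_mx x *m A *m diag_mx y.

From HB Require Import structures.
From mathcomp Require Import all_boot all_order all_algebra.
From mathcomp Require Import ring lra.
Set Implicit Arguments. Unset Strict Implicit. Unset Printing Implicit Defensive.
Import Order.TTheory GRing.Theory Num.Theory.
Local Open Scope ring_scope.

(* Rows of A lying in the same block are equal, so for any diagonal scaling
   S = diag(x) A diag(y) with unit row sums the corresponding entries of x, and
   hence the rows of S, coincide; likewise for columns.  So S is constant on the
   four blocks, say with entries a, b, b', c.  Its row and column sums give
   b' = b, ka + lb = 1 and kb + lc = 1, and since diagonal scaling preserves the
   cross ratio A11 A22 / (A12 A21) = t, also ac = t b^2.  Once b and c are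
   eliminated, ac - t b^2 is strictly increasing in a, so this system has at most
   one positive solution; rationalised as a = (s + k - l) / (k (k + l + s)) with
   s = sqrt(4klt + (k - l)^2), the closed form is visibly a positive solution. *)

Section DiagonalScaling.
Variables (R : comPzRingType) (m n : nat).
Variables (A : 'M[R]_(m, n)) (x : 'rV[R]_m) (y : 'rV[R]_n).

Lemma diag_scaleE i j :
  (diag_mx x *m A *m diag_mx y) i j = x 0 i * A i j * y 0 j.
Proof. by rewrite mul_mx_diag mxE mul_diag_mx mxE. Qed.

Lemma diag_scale_cross_ratio i i' j j' :
  let S := diag_mx x *m A *m diag_mx y in
  S i j * S i' j' * (A i j' * A i' j) = S i j' * S i' j * (A i j * A i' j').
Proof. by move=> S; rewrite /S !diag_scaleE; ring. Qed.

Lemma diag_scale_row_eq i1 i2 :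
  let S := diag_mx x *m A *m diag_mx y in
  row i1 A = row i2 A -> \sum_j S i1 j = 1 -> \sum_j S i2 j = 1 ->
  row i1 S = row i2 S.
Proof.
move=> S A12 sum1 sum2.
have A12j j : A i1 j = A i2 j by have /rowP/(_ j) := A12; rewrite !mxE.
have sumE i : \sum_j S i j = x 0 i * \sum_j A i j * y 0 j.
  by rewrite mulr_sumr; apply: eq_bigr => j _; rewrite diag_scaleE mulrA.
have sum12 : \sum_j A i1 j * y 0 j = \sum_j A i2 j * y 0 j.
  by apply: eq_bigr => j _; rewrite A12j.
have x12 : x 0 i1 = x 0 i2.
  move: sum1 sum2; rewrite !sumE sum12 => sum1 sum2.
  by rewrite -[LHS]mulr1 -sum2 mulrCA sum1 mulr1.
by apply/rowP => j; rewrite mxE [RHS]mxE !diag_scaleE x12 A12j.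
Qed.

End DiagonalScaling.

Lemma diag_scale_col_eq (R : comPzRingType) m n (A : 'M[R]_(m, n)) x y j1 j2 :
  let S := diag_mx x *m A *m diag_mx y in
  col j1 A = col j2 A -> \sum_i S i j1 = 1 -> \sum_i S i j2 = 1 ->
  col j1 S = col j2 S.
Proof.
move=> S A12 sum1 sum2.
have trS : S^T = diag_mx y *m A^T *m diag_mx x.
  by rewrite !trmx_mul !tr_diag_mx mulmxA.
apply: trmx_inj; rewrite !tr_col trS.
apply: diag_scale_row_eq; first by rewrite -!tr_col A12.
- by rewrite -trS -sum1; apply: eq_bigr => i _; rewrite mxE.
- by rewrite -trS -sum2; apply: eq_bigr => i _; rewrite mxE.
Qed.

Definition sinkhorn_block_system (R : numDomainType) (K L t a b c : R) : Prop :=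
  [/\ 0 < a, 0 < b & 0 < c] /\
  [/\ K * a + L * b = 1, K * b + L * c = 1 & a * c = t * b ^+ 2].

Lemma sinkhorn_block_system_uniform (R : numFieldType) (K L : R) :
  0 < K -> 0 < L ->
  sinkhorn_block_system K L 1 (1 / (K + L)) (1 / (K + L)) (1 / (K + L)).
Proof.
move=> K_gt0 L_gt0; have KL_neq0 : K + L != 0 by rewrite gt_eqF ?addr_gt0.
by split; [rewrite !divr_gt0 ?addr_gt0 | split; field].
Qed.

Lemma sinkhorn_block_system_affine (R : numFieldType) (K L t a b c : R) :
  L != 0 -> sinkhorn_block_system K L t a b c ->
  b = (1 - K * a) / L /\ c = (1 - K * b) / L.
Proof. by move=> L_neq0 [_ [row col _]]; split; [rewrite -row | rewrite -col]; field. Qed.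

Lemma sinkhorn_block_system_uniq (R : realFieldType) (K L t a1 b1 c1 a2 b2 c2 : R) :
  0 <= K -> 0 < L -> 0 <= t ->
  sinkhorn_block_system K L t a1 b1 c1 -> sinkhorn_block_system K L t a2 b2 c2 ->
  (a1, b1, c1) = (a2, b2, c2).
Proof.
move=> K_ge0 L_gt0 t_ge0 sol1 sol2.
have L_neq0 : L != 0 by rewrite gt_eqF.
have [[a1_gt0 b1_gt0 _] [_ _ cross1]] := sol1.
have [[_ b2_gt0 c2_gt0] [_ _ cross2]] := sol2.
have [b1E c1E] := sinkhorn_block_system_affine L_neq0 sol1.
have [b2E c2E] := sinkhorn_block_system_affine L_neq0 sol2.
(* With b and c eliminated, the two cross equations differ by a1 - a2 times a
   positive weight. *)
have cross_diff : (a1 - a2) * (K ^+ 2 * a1 + L ^+ 2 * c2 + t * K * L * (b1 + b2)) =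
                  L ^+ 2 * ((a1 * c1 - t * b1 ^+ 2) - (a2 * c2 - t * b2 ^+ 2)).
  by rewrite c1E c2E b1E b2E; field.
have weight_gt0 : 0 < K ^+ 2 * a1 + L ^+ 2 * c2 + t * K * L * (b1 + b2).
  have tKL_ge0 : 0 <= t * K * L by rewrite !mulr_ge0 // ltW.
  apply: ltr_wpDr; first by rewrite mulr_ge0 // addr_ge0 // ltW.
  by apply: ltr_wpDl; [rewrite mulr_ge0 ?sqr_ge0 // ltW | rewrite mulr_gt0 ?exprn_gt0].
move: cross_diff; rewrite cross1 cross2 !subrr mulr0 => /eqP.
rewrite mulf_eq0 (gt_eqF weight_gt0) orbF subr_eq0 => /eqP a12.
have b12 : b1 = b2 by rewrite b1E b2E a12.
have c12 : c1 = c2 by rewrite c1E c2E b12.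
by rewrite a12 b12 c12.
Qed.

Section ClosedForm.
Variables (R : rcfType) (K L t : R).
Hypotheses (K_gt0 : 0 < K) (L_gt0 : 0 < L) (t_gt0 : 0 < t).

Let s : R := Num.sqrt (4 * K * L * t + (K - L) ^+ 2).

Let KLt_gt0 : 0 < 4 * K * L * t. Proof. by rewrite !mulr_gt0. Qed.

Let s_sqr : s ^+ 2 = 4 * K * L * t + (K - L) ^+ 2.
Proof. by rewrite sqr_sqrtr // addr_ge0 ?sqr_ge0 ?ltW. Qed.

Let norm_lt_s : `|K - L| < s.
Proof. by rewrite -sqrtr_sqr ltr_sqrt ?ltrDl // ltr_pwDl ?sqr_ge0. Qed.

Let w_gt0 : 0 < K + L + s.
Proof. by rewrite !addr_gt0 // (le_lt_trans (normr_ge0 _) norm_lt_s). Qed.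

Lemma sinkhorn_block_system_sqrt :
  sinkhorn_block_system K L t
    ((s + (K - L)) / (K * (K + L + s))) (2 / (K + L + s)) ((s - (K - L)) / (L * (K + L + s))).
Proof.
have [s_gt_LK s_gt_KL] : - s < K - L /\ K - L < s.
  by apply/andP; rewrite -ltr_norml norm_lt_s.
have u_gt0 : 0 < s + (K - L) by lra.
have v_gt0 : 0 < s - (K - L) by lra.
have K_neq0 := lt0r_neq0 K_gt0; have L_neq0 := lt0r_neq0 L_gt0.
have w_neq0 := lt0r_neq0 w_gt0.
split; first by split; rewrite ?divr_gt0 ?mulr_gt0 ?ltr0n.
split; [by field; rewrite ?K_neq0 ?w_neq0 | by field; rewrite ?L_neq0 ?w_neq0 |].
have -> : (s + (K - L)) / (K * (K + L + s)) * ((s - (K - L)) / (L * (K + L + s)))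
          = (s ^+ 2 - (K - L) ^+ 2) / (K * L * (K + L + s) ^+ 2).
  by field; rewrite ?K_neq0 ?L_neq0 ?w_neq0.
by rewrite s_sqr; field; rewrite ?K_neq0 ?L_neq0 ?w_neq0.
Qed.

Lemma sinkhorn_block_system_closed_form : t != 1 ->
  let a := 1 / K + (K + L - s) / (2 * K ^+ 2 * (t - 1)) in
  sinkhorn_block_system K L t a ((1 - K * a) / L) ((1 - K * ((1 - K * a) / L)) / L).
Proof.
move=> t_neq1 a.
have K_neq0 := lt0r_neq0 K_gt0; have L_neq0 := lt0r_neq0 L_gt0.
have w_neq0 := lt0r_neq0 w_gt0; have t1_neq0 : t - 1 != 0 by rewrite subr_eq0.
have rationalize : K + L - s = 4 * K * L * (1 - t) / (K + L + s).
  by apply: (mulIf w_neq0); rewrite mulfVK // -subr_sqr s_sqr; ring.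
have -> : a = (s + (K - L)) / (K * (K + L + s)).
  by rewrite /a rationalize; field; rewrite ?K_neq0 ?w_neq0 ?t1_neq0.
have sol := sinkhorn_block_system_sqrt.
by have [<- <-] := sinkhorn_block_system_affine L_neq0 sol.
Qed.

End ClosedForm.

Section BlockConstantMatrix.
Variables (k l : nat).

Local Notation block_const p q r u :=
  (block_mx (const_mx p) (const_mx q) (const_mx r) (const_mx u) : 'M_(k + l)).

Lemma block_const_mxE (T : Type) (p q r u : T) (i j : 'I_(k + l)) :
  block_const p q r u i j =
  if (i < k)%N then (if (j < k)%N then p else q) else (if (j < k)%N then r else u).
Proof.
by case: split_ordP => i' ->; case: split_ordP => j' ->;
  rewrite ?block_mxEul ?block_mxEur ?block_mxEdl ?block_mxEdr mxE.
Qed.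

Lemma block_const_row_eq (T : Type) (p q r u : T) (i i' : 'I_(k + l)) :
  (i < k)%N = (i' < k)%N -> row i (block_const p q r u) = row i' (block_const p q r u).
Proof. by move=> ii'; apply/rowP => j; rewrite mxE [RHS]mxE !block_const_mxE ii'. Qed.

Lemma block_const_col_eq (T : Type) (p q r u : T) (j j' : 'I_(k + l)) :
  (j < k)%N = (j' < k)%N -> col j (block_const p q r u) = col j' (block_const p q r u).
Proof. by move=> jj'; apply/colP => i; rewrite mxE [RHS]mxE !block_const_mxE jj'. Qed.

Lemma block_const_row_sum (R : pzSemiRingType) (p q r u : R) i :
  \sum_j block_const p q r u i j =
  if (i < k)%N then k%:R * p + l%:R * q else k%:R * r + l%:R * u.
Proof.
case: split_ordP => i' ->; rewrite big_split_ord /=;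
  under eq_bigr do rewrite ?block_mxEul ?block_mxEdl mxE;
  under [X in _ + X]eq_bigr do rewrite ?block_mxEur ?block_mxEdr mxE;
  by rewrite !sumr_const !card_ord !mulr_natl.
Qed.

Lemma block_const_col_sum (R : pzSemiRingType) (p q r u : R) j :
  \sum_i block_const p q r u i j =
  if (j < k)%N then k%:R * p + l%:R * r else k%:R * q + l%:R * u.
Proof.
case: split_ordP => j' ->; rewrite big_split_ord /=;
  under eq_bigr do rewrite ?block_mxEul ?block_mxEur mxE;
  under [X in _ + X]eq_bigr do rewrite ?block_mxEdl ?block_mxEdr mxE;
  by rewrite !sumr_const !card_ord !mulr_natl.
Qed.

Hypotheses (k_gt0 : (0 < k)%N) (l_gt0 : (0 < l)%N).

Let i1 : 'I_(k + l) := lshift l (Ordinal k_gt0).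
Let i2 : 'I_(k + l) := rshift k (Ordinal l_gt0).
Let lt_i1 : (i1 < k)%N. Proof. exact: k_gt0. Qed.
Let ge_i2 : (i2 < k)%N = false. Proof. by rewrite /= addn0 ltnn. Qed.

Lemma block_constant_mx (T : Type) (S : 'M[T]_(k + l)) :
  (forall i i' : 'I_(k + l), (i < k)%N = (i' < k)%N -> row i S = row i' S) ->
  (forall j j' : 'I_(k + l), (j < k)%N = (j' < k)%N -> col j S = col j' S) ->
  S = block_const (S i1 i1) (S i1 i2) (S i2 i1) (S i2 i2).
Proof.
move=> rowS colS.
pose rep i := if (i < k)%N then i1 else i2.
have rep_blk i : (i < k)%N = (rep i < k)%N by rewrite /rep; case: ifP; rewrite ?lt_i1 ?ge_i2.
have S_rep i j : S i j = S (rep i) (rep j).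
  move/rowP/(_ j): (rowS _ _ (rep_blk i)); move/colP/(_ (rep i)): (colS _ _ (rep_blk j)).
  by rewrite !mxE => -> ->.
by apply/matrixP => i j; rewrite S_rep block_const_mxE /rep; case: ifP; case: ifP.
Qed.

Lemma doubly_stochastic_block_const (R : numDomainType) (p q r u : R) :
  doubly_stochastic (block_const p q r u) <->
  [/\ r = q, k%:R * p + l%:R * q = 1, k%:R * q + l%:R * u = 1
     & [/\ 0 <= p, 0 <= q & 0 <= u]].
Proof.
split.
- case=> S_ge0 [rowS colS].
  move: (S_ge0 i1 i1) (S_ge0 i1 i2) (S_ge0 i2 i2) (rowS i1) (rowS i2) (colS i1).
  rewrite !block_const_mxE !block_const_row_sum block_const_col_sum lt_i1 ge_i2.
  move=> p_ge0 q_ge0 u_ge0 row1 row2 col1.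
  have l_neq0 : l%:R != 0 :> R by rewrite pnatr_eq0 -lt0n.
  have rq : r = q by apply: (mulfI l_neq0); apply: (addrI (k%:R * p)); rewrite col1 row1.
  by split => //; rewrite -rq.
- case=> -> row1 row2 [p_ge0 q_ge0 u_ge0]; split; [|split].
  + by move=> i j; rewrite block_const_mxE; case: ifP; case: ifP.
  + by move=> i; rewrite block_const_row_sum; case: ifP.
  + by move=> j; rewrite block_const_col_sum; case: ifP.
Qed.

Section TwoBlockSinkhorn.
Variables (R : realFieldType) (M B N : R).
Hypotheses (M_gt0 : 0 < M) (B_gt0 : 0 < B) (N_gt0 : 0 < N).

Let A := block_const M B B N.

Lemma sinkhorn_limit_block_const S :
  sinkhorn_limit A S ->
  exists a b c, sinkhorn_block_system k%:R l%:R (M * N / B ^+ 2) a b c /\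
                S = block_const a b b c.
Proof.
case=> S_ds [x [y [x_gt0 [y_gt0 S_def]]]]; have [_ [rowS colS]] := S_ds.
have S_gt0 i j : 0 < S i j.
  rewrite S_def diag_scaleE /A block_const_mxE !mulr_gt0 //.
  by case: ifP; case: ifP.
have S_block : S = block_const (S i1 i1) (S i1 i2) (S i2 i1) (S i2 i2).
  apply: block_constant_mx => [i i' ii' | j j' jj']; rewrite S_def.
  - by apply: diag_scale_row_eq; rewrite -?S_def ?rowS // (block_const_row_eq _ _ _ _ ii').
  - by apply: diag_scale_col_eq; rewrite -?S_def ?colS // (block_const_col_eq _ _ _ _ jj').
move: S_ds; rewrite S_block => /doubly_stochastic_block_const[S21 row1 row2 _].
have cross : S i1 i1 * S i2 i2 = M * N / B ^+ 2 * S i1 i2 ^+ 2.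
  have := diag_scale_cross_ratio A x y i1 i2 i1 i2.
  rewrite -S_def /A !block_const_mxE lt_i1 ge_i2 S21 => cross.
  have B2_neq0 : B * B != 0 by rewrite mulf_neq0 ?lt0r_neq0.
  by apply: (mulIf B2_neq0); rewrite cross; field; rewrite lt0r_neq0.
exists (S i1 i1), (S i1 i2), (S i2 i2); split; first by split; [split | split].
by rewrite S21.
Qed.

Lemma sinkhorn_limit_block_const_system a b c :
  sinkhorn_block_system k%:R l%:R (M * N / B ^+ 2) a b c ->
  sinkhorn_limit A (block_const a b b c).
Proof.
case=> [[a_gt0 b_gt0 c_gt0] [row col cross]].
split; first by apply/doubly_stochastic_block_const; split; rewrite // ?ltW.
have M_neq0 := lt0r_neq0 M_gt0; have B_neq0 := lt0r_neq0 B_gt0.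
have a_neq0 := lt0r_neq0 a_gt0.
have c_eq : c = M * N * b ^+ 2 / (B ^+ 2 * a).
  by apply: (mulfI a_neq0); rewrite cross; field; rewrite B_neq0 a_neq0.
(* Normalise x to 1 on the first block; the entries a and b then force the rest. *)
exists (\row_i (if (i < k)%N then 1 else b * M / (B * a))).
exists (\row_j (if (j < k)%N then a / M else b / B)).
split; first by move=> i; rewrite mxE; case: ifP; rewrite ?ltr01 ?divr_gt0 ?mulr_gt0.
split; first by move=> j; rewrite mxE; case: ifP; rewrite divr_gt0.
apply/matrixP => i j; rewrite diag_scaleE /A !block_const_mxE !mxE.
by case: ifP; case: ifP => _ _; rewrite ?c_eq; field; rewrite ?M_neq0 ?B_neq0 ?a_neq0.
Qed.

End TwoBlockSinkhorn.

End BlockConstantMatrix.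

Theorem mainTheorem5 (R : rcfType) (k l : nat) (M B N : R) :
  (0 < k)%N -> (0 < l)%N -> 0 < M -> 0 < B -> 0 < N ->
  let n := (k + l)%N in
  let A : 'M[R]_(k + l) :=
    block_mx (const_mx M) (const_mx B) (const_mx B) (const_mx N) in
  let t := M * N / B ^+ 2 in
  let a := if t == 1 then 1 / n%:R
           else 1 / k%:R + (n%:R - Num.sqrt (4 * k%:R * l%:R * t + (k%:R - l%:R) ^+ 2))
                           / (2 * k%:R ^+ 2 * (t - 1)) in
  let b := if t == 1 then 1 / n%:R else (1 - k%:R * a) / l%:R in
  let c := if t == 1 then 1 / n%:R else (1 - k%:R * b) / l%:R in
  (forall S : 'M[R]_(k + l),
     sinkhorn_limit A S <->
     S = block_mx (const_mx a) (const_mx b) (const_mx b) (const_mx c)) /\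
  (t != 1 -> c = (l%:R - k%:R + k%:R ^+ 2 * a) / l%:R ^+ 2).
Proof.
move=> k_gt0 l_gt0 M_gt0 B_gt0 N_gt0 n A t a b c.
have K_gt0 : 0 < k%:R :> R by rewrite ltr0n.
have L_gt0 : 0 < l%:R :> R by rewrite ltr0n.
have t_gt0 : 0 < t by rewrite divr_gt0 ?mulr_gt0 ?exprn_gt0.
have abc : sinkhorn_block_system k%:R l%:R t a b c.
  rewrite /c /b /a /n natrD; have [->|t_neq1] := eqVneq t 1.
  - exact: sinkhorn_block_system_uniform.
  - exact: sinkhorn_block_system_closed_form.
split=> [S | t_neq1].
- split=> [/(sinkhorn_limit_block_const k_gt0 l_gt0 M_gt0 B_gt0 N_gt0) | ->].
    move=> [a' [b' [c' [abc' ->]]]].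
    by case: (sinkhorn_block_system_uniq (ltW K_gt0) L_gt0 (ltW t_gt0) abc' abc) => -> -> ->.
  exact: sinkhorn_limit_block_const_system.
- by rewrite /c /b (negbTE t_neq1); field; rewrite lt0r_neq0.
Qed.
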